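(* Let $\tilde U=[\tilde u_1,\dots,\tilde u_N]\in\mathbb R^{d\times N}$ be a normalized embedding, i.e. $\tilde K=\tilde U^\top\tilde U$ satisfies $\tilde K_{kk}=1$ for all $k\in[N]$. Let $C>0$ and $\mathcal H_{\tilde U}=\{w\mid w=\tilde U\beta,\ \beta\in\mathbb R^N,\ \|\beta\|_\infty\le C\}$. Then for $p\in(0,1/2]$, $$R(\mathcal H_{\tilde U},\tilde U,p)\le C\sqrt{2p\,\lambda_1(\tilde K)},$$ where $\lambda_1(\tilde K)$ is the largest eigenvalue of $\tilde K$.
   Context: Transductive Rademacher complexity: for a class $\mathcal H$ of vectors $h\in\mathbb R^d$ and $p\in(0,1/2]$, $R(\mathcal H,\tilde U,p)=\frac1N\mathbb E_\gamma\big[\sup_{h\in\mathcal H}\sum_{k=1}^N\gamma_k h^\top\tilde u_k\big]$, where $\gamma_1,\dots,\gamma_N$ are i.i.d. random variables taking values $+1,-1,0$ with probabilities $p,p,1-2p$. In the paper $\tilde U$ is an embedding of node pairs of a graph (columns indexed by pairs), but the statement only uses that the columns have unit norm. *)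

From mathcomp Require Import all_boot all_order all_algebra.
From mathcomp Require Import classical_sets reals.
Set Implicit Arguments. Unset Strict Implicit. Unset Printing Implicit Defensive.
Import Order.TTheory GRing.Theory Num.Theory.
Local Open Scope ring_scope.
Local Open Scope classical_set_scope.

(* A draw of gamma_k is an element of 'I_3: 0 |-> +1, 1 |-> -1, 2 |-> 0. *)
Definition gam_val (R : ringType) (t : 'I_3) : R :=
  if val t == 0%N then 1 else if val t == 1%N then -1 else 0.

Definition gam_prob (R : ringType) (p : R) (t : 'I_3) : R :=
  if val t == 2%N then 1 - 2%:R * p else p.

(* Transductive Rademacher complexity
   R(H,U,p) = 1/N E_gamma [ sup_{h in H} sum_k gamma_k h^T u_k ],
   the expectation over i.i.d. gamma written as a finite weighted sum. *)
Definition trans_rademacher (R : realType) (d N : nat)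
    (H : set 'cV[R]_d) (U : 'M[R]_(d, N)) (p : R) : R :=
  N%:R^-1 * \sum_(g : {ffun 'I_N -> 'I_3})
     (\prod_(k < N) gam_prob p (g k)) *
     sup [set x : R | exists2 h, H h &
            x = \sum_(k < N) gam_val R (g k) * ((h^T *m col k U) 0 0)].

Definition H_U (R : realType) (d N : nat) (U : 'M[R]_(d, N)) (C : R)
    : set 'cV[R]_d :=
  [set w | exists2 beta : 'cV[R]_N, (forall k, `|beta k 0| <= C) & w = U *m beta].

Definition largest_eigenvalue (R : realType) (n : nat) (K : 'M[R]_n) (lam : R) :=
  eigenvalue K lam /\ forall mu, eigenvalue K mu -> mu <= lam.

(* For h = U beta the objective sum_k gamma_k h^T u_k equals beta^T K gamma with
   K = U^T U, so the supremum over H_U is at most C ||K gamma||_1.  With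
   t = sqrt (2 p lam), AM-GM gives ||K gamma||_1 <= (||K gamma||_2^2 + N t^2) / 2t.
   The gamma_k are uncorrelated with variance 2p, so E ||K gamma||_2^2 = 2p tr (K^2),
   and tr (K^2) <= lam tr K = lam N because the spectrum of the Gram matrix K lies
   in [0, lam].  Hence the expectation is at most C N t. *)

From mathcomp Require Import all_boot all_order all_algebra.
From mathcomp Require Import classical_sets reals complex ring lra.
Set Implicit Arguments. Unset Strict Implicit. Unset Printing Implicit Defensive.
Import Order.TTheory GRing.Theory Num.Theory.
Local Open Scope ring_scope.

Lemma mxtrace_mul_trmx (R : comPzSemiRingType) m n (A : 'M[R]_(m, n)) :
  \tr (A *m A^T) = \sum_i \sum_j A i j ^+ 2.
Proof. by apply: eq_bigr => i _; rewrite mxE; apply: eq_bigr => j _; rewrite mxE. Qed.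

Lemma gram_eigenvalue_ge0 (R : realFieldType) m n (U : 'M[R]_(m, n)) a :
  eigenvalue (U^T *m U) a -> 0 <= a.
Proof.
move=> /eigenvalueP [v vK v_neq0].
have tr_ge0 k (M : 'M[R]_(k, _)) : 0 <= \tr (M *m M^T).
  by rewrite mxtrace_mul_trmx; do 2!apply: sumr_ge0 => ? _; exact: sqr_ge0.
have vv_gt0 : 0 < \tr (v *m v^T).
  rewrite lt_def tr_ge0 andbT; apply: contra v_neq0.
  rewrite mxtrace_mul_trmx big_ord1 psumr_eq0 => [/allP v0|j _]; last exact: sqr_ge0.
  apply/eqP/rowP => j; rewrite mxE; apply/eqP; rewrite -sqrf_eq0.
  by apply: v0; rewrite mem_index_enum.
have : \tr (v *m U^T *m (v *m U^T)^T) = a * \tr (v *m v^T).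
  by rewrite trmx_mul trmxK !mulmxA -(mulmxA v) vK -scalemxAl mxtraceZ.
by move/(congr1 (fun x => 0 <= x)); rewrite tr_ge0 pmulr_lge0 // => <-.
Qed.

Lemma sym_mx_eigen_traces (R : rcfType) n (K : 'M[R]_n) : K^T = K ->
  exists a : 'I_n -> R, [/\ forall i, eigenvalue K (a i),
    \tr K = \sum_i a i & \tr (K *m K) = \sum_i a i ^+ 2].
Proof.
move=> K_sym; pose KC := map_mx (real_complex R) K.
have KC_herm : KC \is hermsymmx.
  apply: realsym_hermsym.
    apply/is_hermitianmxP; rewrite expr0 scale1r.
    by apply/matrixP => i j; rewrite !mxE -[in LHS]K_sym mxE.
  by apply/mxOverP => i j; rewrite mxE; apply/complex_realP; exists (K i j).
have /orthomx_spectralP KCE := hermitian_normalmx KC_herm.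
set P := spectralmx KC in KCE; set D := spectral_diag KC in KCE.
have P_unit : P \in unitmx by apply: spectral_unit.
have DE i : D 0 i = real_complex R (complex.Re (D 0 i)).
  by rewrite RRe_real //; apply: (mxOverP (hermitian_spectral_diag_real KC_herm)).
exists (fun i => complex.Re (D 0 i)); split.
- move=> i; rewrite -(eigenvalue_map (real_complex R)) -/KC.
  apply/eigenvalueP; exists (row i P).
    rewrite -row_mul KCE !mulmxA mulmxV // mul1mx.
    by apply/rowP => j; rewrite mul_diag_mx !mxE [in LHS]DE.
  apply: contraNneq (oner_neq0 R[i]) => Pi0.
  have := congr1 (fun M => (M *m invmx P) 0 i) Pi0.
  by rewrite -row_mul mulmxV // row1 mul0mx !mxE !eqxx => /eqP.
- apply: (@complexI R); rewrite [RHS]rmorph_sum -trace_map_mx -/KC KCE.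
  rewrite mxtrace_mulC mulmxA mulmxV // mul1mx mxtrace_diag.
  by apply: eq_bigr => i _; exact: DE.
- apply: (@complexI R); rewrite [RHS]rmorph_sum -trace_map_mx map_mxM -/KC KCE.
  rewrite -!mulmxA mulKVmx // mxtrace_mulC -!mulmxA mulmxV // mulmx1.
  rewrite mulmx_diag mxtrace_diag; apply: eq_bigr => i _.
  by rewrite mxE rmorphXn /= -DE expr2.
Qed.

Lemma mxtrace_le_eigen (R : rcfType) n (K : 'M[R]_n) lam : K^T = K ->
  (forall a, eigenvalue K a -> a <= lam) -> \tr K <= n%:R * lam.
Proof.
move=> /sym_mx_eigen_traces [a [a_eig -> _]] le_lam.
rewrite mulr_natl -[n in _ *+ n]card_ord -sumr_const.
by apply: ler_sum => i _; exact: le_lam.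
Qed.

Lemma mxtrace_sqr_le (R : rcfType) n (K : 'M[R]_n) lam : K^T = K ->
  (forall a, eigenvalue K a -> 0 <= a <= lam) -> \tr (K *m K) <= lam * \tr K.
Proof.
move=> /sym_mx_eigen_traces [a [a_eig -> ->]] a_bnd.
rewrite mulr_sumr ler_sum // => i _; have /andP[a_ge0 a_le] := a_bnd _ (a_eig i).
by rewrite expr2 ler_wpM2r.
Qed.

Definition gam_weight (R : ringType) (p : R) N (g : {ffun 'I_N -> 'I_3}) : R :=
  \prod_(k < N) gam_prob p (g k).

Section GammaMoments.
Variables (R : comRingType) (p : R) (N : nat).

Lemma sum_gam_prob : \sum_t gam_prob p t = 1.
Proof. by rewrite !big_ord_recl big_ord0 /gam_prob /=; ring. Qed.

Lemma sum_gam_prob_val : \sum_t gam_prob p t * gam_val R t = 0.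
Proof. by rewrite !big_ord_recl big_ord0 /gam_prob /gam_val /=; ring. Qed.

Lemma sum_gam_prob_sqr : \sum_t gam_prob p t * gam_val R t ^+ 2 = 2%:R * p.
Proof. by rewrite !big_ord_recl big_ord0 /gam_prob /gam_val /=; ring. Qed.

Lemma sum_gam_weight : \sum_(g : {ffun 'I_N -> 'I_3}) gam_weight p g = 1.
Proof.
rewrite -(bigA_distr_bigA (fun _ : 'I_N => gam_prob p)) /=.
by apply: big1 => k _; exact: sum_gam_prob.
Qed.

Lemma gam_covariance (k l : 'I_N) :
  \sum_(g : {ffun 'I_N -> 'I_3}) gam_weight p g * (gam_val R (g k) * gam_val R (g l))
  = (k == l)%:R * (2%:R * p).
Proof.
pose F (i : 'I_N) (t : 'I_3) := gam_prob p t *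
   ((if i == k then gam_val R t else 1) * (if i == l then gam_val R t else 1)).
transitivity (\sum_(g : {ffun 'I_N -> 'I_3}) \prod_i F i (g i)).
  apply: eq_bigr => g _; rewrite /F !big_split /=.
  by rewrite -!big_mkcond !big_pred1_eq.
rewrite -bigA_distr_bigA /= (bigD1 k) //= /F eqxx; have [<-|kl] := eqVneq k l.
  rewrite [X in _ * X]big1 => [|i /negbTE ik]; last first.
    by rewrite ik; under eq_bigr do rewrite !mulr1; exact: sum_gam_prob.
  by rewrite -sum_gam_prob_sqr mulr1 mul1r; apply: eq_bigr => t _; rewrite expr2.
by under eq_bigr do rewrite mulr1; rewrite sum_gam_prob_val !mul0r.
Qed.

Lemma gam_sqr_moment (a : 'I_N -> R) :
  \sum_(g : {ffun 'I_N -> 'I_3}) gam_weight p g * (\sum_k a k * gam_val R (g k)) ^+ 2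
  = 2%:R * p * \sum_k a k ^+ 2.
Proof.
have expand g : gam_weight p g * (\sum_k a k * gam_val R (g k)) ^+ 2
    = \sum_k \sum_l a k * a l * (gam_weight p g * (gam_val R (g k) * gam_val R (g l))).
  rewrite expr2 mulr_suml mulr_sumr; apply: eq_bigr => k _.
  by rewrite !mulr_sumr; apply: eq_bigr => l _; ring.
rewrite (eq_bigr _ (fun g _ => expand g)) exchange_big mulr_sumr; apply: eq_bigr => k _.
rewrite exchange_big; under eq_bigr do rewrite -mulr_sumr gam_covariance.
rewrite (bigD1 k) //= eqxx big1 ?addr0 => [|l /negbTE kl]; first by rewrite mul1r; ring.
by rewrite eq_sym kl mul0r mulr0.
Qed.

Lemma gam_sqr_moment_mx m (A : 'M[R]_(m, N)) :
  \sum_(g : {ffun 'I_N -> 'I_3})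
     gam_weight p g * \sum_j (\sum_k A j k * gam_val R (g k)) ^+ 2
  = 2%:R * p * \tr (A *m A^T).
Proof.
under eq_bigr do rewrite mulr_sumr.
rewrite exchange_big mxtrace_mul_trmx mulr_sumr.
by apply: eq_bigr => j _; exact: gam_sqr_moment.
Qed.

End GammaMoments.

Lemma gam_weight_ge0 (R : realFieldType) (p : R) N (g : {ffun 'I_N -> 'I_3}) :
  0 <= p -> p <= 2%:R^-1 -> 0 <= gam_weight p g.
Proof.
move=> p_ge0 p_le; apply: prodr_ge0 => k _; rewrite /gam_prob.
by case: ifP => // _; rewrite subr_ge0 -ler_pdivlMl ?ltr0n // mulr1.
Qed.

Lemma expect_sum_norm_le (R : realFieldType) (I : finType) n
    (w : I -> R) (s : I -> 'I_n -> R) (t : R) :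
  (forall i, 0 <= w i) -> \sum_i w i = 1 -> 0 < t ->
  \sum_i w i * \sum_j s i j ^+ 2 <= n%:R * t ^+ 2 ->
  \sum_i w i * \sum_j `|s i j| <= n%:R * t.
Proof.
move=> w_ge0 w_sum1 t_gt0 second_le.
have amgm (x : R) : `|x| * (t *+ 2) <= x ^+ 2 + t ^+ 2.
  rewrite -real_normK ?num_real //; have := sqr_ge0 (`|x| - t); nra.
rewrite -(@ler_pM2r _ (t *+ 2)) ?pmulrn_lgt0 //.
apply: (@le_trans _ _ (\sum_i w i * \sum_j (s i j ^+ 2 + t ^+ 2))).
  rewrite mulr_suml; apply: ler_sum => i _; rewrite -mulrA ler_wpM2l // mulr_suml.
  by apply: ler_sum => j _; exact: amgm.
under eq_bigr do rewrite big_split /= mulrDr sumr_const card_ord -mulr_natl.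
rewrite big_split /= -mulr_suml w_sum1 mul1r; nra.
Qed.

Local Open Scope classical_set_scope.

Lemma sup_H_U_le (R : realType) d N (U : 'M[R]_(d, N)) (C : R) (c : 'I_N -> R) :
  0 <= C ->
  sup [set x : R | exists2 h, H_U U C h & x = \sum_k c k * ((h^T *m col k U) 0 0)]
  <= C * \sum_j `|\sum_k (U^T *m U) j k * c k|.
Proof.
move=> C_ge0; apply: ge_sup.
  exists (\sum_k c k * (((0 : 'cV_d)^T *m col k U) 0 0)); exists 0 => //.
  by exists 0; [move=> k; rewrite mxE normr0 | rewrite mulmx0].
move=> _ [_ [beta beta_le ->] ->].
have pairing k : ((U *m beta)^T *m col k U) 0 0 = \sum_j beta j 0 * (U^T *m U) j k.
  rewrite trmx_mul -mulmxA (_ : U^T *m col k U = col k (U^T *m U)).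
    by rewrite mxE; apply: eq_bigr => j _; rewrite !mxE.
  by rewrite !colE mulmxA.
under eq_bigr do rewrite pairing mulr_sumr.
rewrite exchange_big mulr_sumr /=; apply: ler_sum => j _.
have -> : \sum_k c k * (beta j 0 * (U^T *m U) j k)
    = beta j 0 * \sum_k (U^T *m U) j k * c k.
  by rewrite mulr_sumr; apply: eq_bigr => k _; ring.
by rewrite (le_trans (ler_norm _)) // normrM ler_wpM2r.
Qed.

Section UnitDiagonalGram.
Variables (R : rcfType) (d N : nat) (U : 'M[R]_(d, N)) (lam : R).
Hypothesis gram_diag : forall k, (U^T *m U) k k = 1.
Hypothesis lam_max : forall mu, eigenvalue (U^T *m U) mu -> mu <= lam.

Let gram_sym : (U^T *m U)^T = U^T *m U.
Proof. by rewrite trmx_mul trmxK. Qed.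

Lemma mxtrace_gram : \tr (U^T *m U) = N%:R.
Proof. by rewrite /mxtrace (eq_bigr _ (fun k _ => gram_diag k)) sumr_const card_ord. Qed.

Lemma gram_eigen_max_ge1 : (0 < N)%N -> 1 <= lam.
Proof.
move=> N_gt0; rewrite -(@ler_pMr _ _ N%:R) ?ltr0n //.
by rewrite -[X in X <= _]mxtrace_gram mxtrace_le_eigen.
Qed.

Lemma gam_gram_sqr_moment_le (p : R) : 0 <= p ->
  \sum_(g : {ffun 'I_N -> 'I_3}) gam_weight p g *
     \sum_j (\sum_k (U^T *m U) j k * gam_val R (g k)) ^+ 2
  <= N%:R * (2%:R * p * lam).
Proof.
move=> p_ge0; rewrite gam_sqr_moment_mx gram_sym -mxtrace_gram [X in _ <= X]mulrC.
rewrite -[_ * lam * _]mulrA ler_wpM2l ?mulr_ge0 //.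
apply: mxtrace_sqr_le => // a a_eig.
by rewrite (gram_eigenvalue_ge0 a_eig) lam_max.
Qed.

End UnitDiagonalGram.

Theorem theorem2 (R : realType) (d N : nat) (U : 'M[R]_(d, N)) (C p lam : R) :
  (forall k : 'I_N, (U^T *m U) k k = 1) ->
  0 < C ->
  0 < p -> p <= 2%:R^-1 ->
  largest_eigenvalue (U^T *m U) lam ->
  trans_rademacher (H_U U C) U p <= C * Num.sqrt (2%:R * p * lam).
Proof.
move=> gram_diag C_gt0 p_gt0 p_le [_ lam_max].
have C_ge0 := ltW C_gt0; have p_ge0 := ltW p_gt0.
have [N0|N_gt0] := posnP N.
  rewrite /trans_rademacher (_ : N%:R^-1 = 0) ?mul0r; last by rewrite N0 invr0.
  by rewrite mulr_ge0 ?sqrtr_ge0.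
have lam_gt0 := lt_le_trans ltr01 (gram_eigen_max_ge1 gram_diag lam_max N_gt0).
set t := Num.sqrt (2%:R * p * lam).
have t_gt0 : 0 < t by rewrite sqrtr_gt0 !mulr_gt0.
have t_sqr : t ^+ 2 = 2%:R * p * lam by rewrite sqr_sqrtr // !mulr_ge0 // ltW.
have second_le := gam_gram_sqr_moment_le gram_diag lam_max p_ge0.
rewrite -t_sqr in second_le.
have first_le := expect_sum_norm_le (fun g => gam_weight_ge0 g p_ge0 p_le)
  (sum_gam_weight p N) t_gt0 second_le.
rewrite /trans_rademacher.
apply: (@le_trans _ _ (N%:R^-1 * \sum_(g : {ffun 'I_N -> 'I_3}) gam_weight p g *
    (C * \sum_j `|\sum_k (U^T *m U) j k * gam_val R (g k)|))).
  rewrite ler_wpM2l ?invr_ge0 ?ler0n // ler_sum // => g _.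
  rewrite ler_wpM2l ?gam_weight_ge0 //; exact: sup_H_U_le.
under eq_bigr do rewrite mulrCA.
by rewrite -mulr_sumr mulrCA ler_wpM2l // ler_pdivrMl ?ltr0n.
Qed.
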